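(* For every sufficiently large integer $m$ there exists a bipartite graph $H$ with an odd number of edges, maximum degree at most $102$, and vertex classes $A_1\cup A_2$ and $B_1\cup B_2$ (with $A_1,A_2,B_1,B_2$ pairwise disjoint), where $|A_1|=|B_1|=2m$ and $|A_2|=|B_2|=5m$, such that for every $A_1'\subseteq A_1$ and $B_1'\subseteq B_1$ with $|A_1'|=|B_1'|\ge m$, there is a perfect matching in $H$ between $A_1'\cup A_2$ and $B_1'\cup B_2$. *)

From mathcomp Require Import all_boot.
Set Implicit Arguments. Unset Strict Implicit. Unset Printing Implicit Defensive.

Definition ldeg (X Y : finType) (E : {set X * Y}) (x : X) : nat :=
  #|[set y : Y | (x, y) \in E]|.
Definition rdeg (X Y : finType) (E : {set X * Y}) (y : Y) : nat :=
  #|[set x : X | (x, y) \in E]|.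

Definition max_deg_le (X Y : finType) (E : {set X * Y}) (d : nat) : Prop :=
  (forall x, ldeg E x <= d) /\ (forall y, rdeg E y <= d).

Definition perfect_matching_between (X Y : finType) (E : {set X * Y})
    (S : {set X}) (T : {set Y}) (M : {set X * Y}) : Prop :=
  [/\ M \subset E,
      (forall e, e \in M -> (e.1 \in S) && (e.2 \in T)),
      (forall x, x \in S -> #|[set y : Y | (x, y) \in M]| = 1) &
      (forall y, y \in T -> #|[set x : X | (x, y) \in M]| = 1)].

(* Vertex classes: A = A1 + A2 with A1 = 'I_(2m), A2 = 'I_(5m); same for B.
   Injections of subsets of A1 (resp. B1) and all of A2 (resp. B2). *)
Definition side (m : nat) : finType := ('I_(2 * m) + 'I_(5 * m))%type.

Definition lift_side (m : nat) (S1 : {set 'I_(2 * m)}) : {set side m} :=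
  [set v : side m | match v with inl a => a \in S1 | inr _ => true end].

(* Fold each side A1 + A2, B1 + B2 onto [0, 5m), with A1 landing in the first 2m points,
   so that fibres have size at most 2.  A union bound over pairs (I, J) with |I| = s <= 2m
   and |J| = 2s - 1 shows that some 33 permutations sigma_k of [0, 5m) expand every set I
   with |I| <= 2m to |U_k sigma_k(I)| >= 2|I|: for each s the expected number of such
   contained pairs is at most 2^-s.  Joining every vertex to the copies in the opposite
   A2 or B2 of the images of its fold under two such families, every set of at most 4m
   vertices on either side has at least as many neighbours in the part that is always
   kept.  Since |A1' + A2| <= 7m <= 2 * 4m, this two-sided small-set condition implies
   Hall's condition.  Degrees stay below 100, and one extra edge inside A1 x B1 makes the
   number of edges odd. *)
From mathcomp Require Import all_boot fingroup perm zify ring.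
Set Implicit Arguments. Unset Strict Implicit. Unset Printing Implicit Defensive.

Lemma leq_exp2rW m n e : m <= n -> m ^ e <= n ^ e.
Proof. by move=> le_mn; elim: e => // e IH; rewrite !expnS leq_mul. Qed.

Lemma sum_le_geometric n (x : nat -> nat) M :
  (forall i, i < n -> x i * 2 ^ i.+1 <= M) ->
  (\sum_(i < n) x i) * 2 ^ n + M <= M * 2 ^ n.
Proof.
elim: n => [|n IH] xM; first by rewrite big_ord0 mul0n add0n muln1.
have IHn := IH (fun i lt_in => xM i (ltnW lt_in)).
have xnM := xM n (ltnSn n).
rewrite big_ord_recr /= mulnDl !expnS in xnM *.
set P := 2 ^ n in IHn xnM *; set S := \sum_(i < n) x i in IHn *.
lia.
Qed.

Lemma ffact_leq_expn n k : n ^_ k <= n ^ k.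
Proof.
elim: k n => [|k IH] n //; rewrite ffactnS expnS leq_mul //.
exact: leq_trans (IH _) (leq_exp2rW _ (leq_pred n)).
Qed.

Lemma exp2S_leq_fact k : 2 ^ k.+1 <= 2 * k.+1`!.
Proof. by elim: k => [|k IH] //; rewrite expnS factS; nia. Qed.

(* The binomial terms of (k + 1)^k decay at least geometrically. *)
Lemma expSn_self_le k : k.+1 ^ k <= 3 * k ^ k.
Proof.
case: k => [|k] //; set K := k.+1.
rewrite -addn1 expnDn big_ord_recl /= bin0 subn0 exp1n !mul1n muln1.
pose x i := 'C(K, i.+1) * K ^ (K - i.+1).
have xM i : i < K -> x i * 2 ^ i.+1 <= 2 * K ^ K.
  move=> lt_iK.
  apply: (@leq_trans (x i * (2 * (i.+1)`!))); first by rewrite leq_mul2l exp2S_leq_fact orbT.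
  have -> : x i * (2 * (i.+1)`!) = 2 * (K ^ (K - i.+1) * ('C(K, i.+1) * (i.+1)`!)).
    by rewrite /x; ring.
  rewrite leq_mul2l bin_ffact /=.
  apply: leq_trans (leq_mul (leqnn _) (ffact_leq_expn K i.+1)) _.
  by rewrite -expnD subnK.
have := sum_le_geometric xM.
have -> : \sum_(i < K) 'C(K, bump 0 i) * (K ^ (K - bump 0 i) * 1 ^ bump 0 i) =
          \sum_(i < K) x i by apply: eq_bigr => i _; rewrite exp1n muln1.
have : 0 < 2 ^ K by rewrite expn_gt0.
nia.
Qed.

Lemma exp_self_leq_fact k : k ^ k <= 3 ^ k * k`!.
Proof.
elim: k => [|k IH] //.
rewrite expnS factS.
apply: leq_trans (leq_mul (leqnn _) (expSn_self_le k)) _.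
have -> : 3 ^ k.+1 * (k.+1 * k`!) = k.+1 * (3 * (3 ^ k * k`!)) by rewrite expnS; ring.
by rewrite !leq_mul2l IH !orbT.
Qed.

Lemma bin_mul_exp_self_le n k : 'C(n, k) * k ^ k <= 3 ^ k * n ^ k.
Proof.
apply: leq_trans (leq_mul (leqnn _) (exp_self_leq_fact k)) _.
by rewrite mulnCA leq_mul2l bin_ffact ffact_leq_expn orbT.
Qed.

Lemma ffact_ratio_le j n s : j <= n -> j ^_ s * n ^ s <= n ^_ s * j ^ s.
Proof.
elim: s => [|s IH] le_jn //; rewrite !ffactnSr !expnSr.
have -> : j ^_ s * (j - s) * (n ^ s * n) = (j ^_ s * n ^ s) * ((j - s) * n) by ring.
have -> : n ^_ s * (n - s) * (j ^ s * j) = (n ^_ s * j ^ s) * ((n - s) * j) by ring.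
by apply: leq_mul; [exact: IH | nia].
Qed.

Lemma bin_ratio_le j n s : j <= n -> 'C(j, s) * n ^ s <= 'C(n, s) * j ^ s.
Proof.
move=> le_jn; rewrite -(leq_pmul2r (fact_gt0 s)).
rewrite mulnAC [_ * j ^ s * _]mulnAC !bin_ffact.
exact: ffact_ratio_le.
Qed.

Lemma exp_const_le r : 3 ^ (3 * r + 2) * 2 ^ (62 * r + 64) <= 5 ^ (30 * r + 31).
Proof.
have digits : 3 * 2 ^ 10 <= 5 ^ 5 by [].
have step : 3 ^ 3 * 2 ^ 62 <= 5 ^ 30.
  rewrite -[62]/(2 + 10 * 6) -[30]/(5 * 6) expnD mulnA !expnM.
  apply: leq_trans _ (leq_exp2rW 6 digits); rewrite expnMn.
  exact: leq_mul (isT : 3 ^ 3 * 2 ^ 2 <= 3 ^ 6) (leqnn _).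
have base : 3 ^ 2 * 2 ^ 64 <= 5 ^ 31.
  rewrite -[64]/(4 + 10 * 6) -[31]/(1 + 5 * 6) !expnD mulnA !expnM.
  apply: leq_trans _ (leq_mul (leqnn 5) (leq_exp2rW 6 digits)); rewrite expnMn mulnA.
  exact: leq_mul (isT : 3 ^ 2 * 2 ^ 4 <= 5 * 3 ^ 6) (leqnn _).
rewrite (expnD 3) (expnD 2) (expnD 5) !expnM mulnACA -expnMn.
exact: leq_mul (leq_exp2rW _ step) base.
Qed.

(* The union-bound term for sets of size s: choose an s-set and a (2s - 1)-set receiving
   its images, each of the 33 permutations contributing a factor ((2s - 1) / N)^s. *)
Lemma bin_bin_exp_le N s : 0 < s -> 5 * s <= 2 * N ->
  'C(N, s) * 'C(N, s.*2.-1) * 2 ^ s * s.*2.-1 ^ (33 * s) <= N ^ (33 * s).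
Proof.
case: s => [//|r] _ le_sN; set s := r.+1.
have -> : s.*2.-1 = r.*2.+1 by rewrite /s doubleS.
set j := r.*2.+1; set q := 31 * r + 32; set e := 30 * r + 31.
have Cs_le := bin_mul_exp_self_le N s; have Cj_le := bin_mul_exp_self_le N j.
have jq_le : j ^ q <= 2 ^ q * s ^ q by rewrite -expnMn leq_exp2rW // /j /s; lia.
have se_le : 5 ^ e * s ^ e <= 2 ^ e * N ^ e by rewrite -!expnMn leq_exp2rW.
have const_le : 3 ^ s * 3 ^ j * (2 ^ s * 2 ^ s * 2 ^ e * 2 ^ e) <= 5 ^ e.
  rewrite -!expnD (_ : s + j = 3 * r + 2); last by rewrite /s /j; lia.
  rewrite (_ : s + s + e + e = 62 * r + 64); last by rewrite /s /e; lia.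
  exact: exp_const_le.
have Ej : j ^ (33 * s) = j ^ j * j ^ q by rewrite -expnD /j /q /s; congr (_ ^ _); lia.
have EN : N ^ (33 * s) = N ^ s * N ^ j * N ^ e.
  by rewrite -!expnD /j /e /s; congr (_ ^ _); lia.
have E2 : 2 ^ q = 2 ^ s * 2 ^ e by rewrite -expnD /q /s /e; congr (_ ^ _); lia.
have Es : s ^ q = s ^ s * s ^ e by rewrite -expnD /q /s /e; congr (_ ^ _); lia.
rewrite Ej EN.
rewrite -(@leq_pmul2r (s ^ s * 5 ^ e)) ?muln_gt0 ?expn_gt0 //.
apply: (@leq_trans ((3 ^ s * N ^ s) * (3 ^ j * N ^ j) * 2 ^ s *
                    (2 ^ s * 2 ^ e * (s ^ s * s ^ e)) * 5 ^ e)).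
  rewrite -E2 -Es.
  have -> : 'C(N, s) * 'C(N, j) * 2 ^ s * (j ^ j * j ^ q) * (s ^ s * 5 ^ e) =
      ('C(N, s) * s ^ s) * ('C(N, j) * j ^ j) * 2 ^ s * j ^ q * 5 ^ e by ring.
  by apply: leq_mul => //; apply: leq_mul => //; apply: leq_mul; first exact: leq_mul.
apply: (@leq_trans ((3 ^ s * 3 ^ j * (2 ^ s * 2 ^ s * 2 ^ e)) * (N ^ s * N ^ j * s ^ s) *
                    (2 ^ e * N ^ e))).
  have -> : 3 ^ s * N ^ s * (3 ^ j * N ^ j) * 2 ^ s * (2 ^ s * 2 ^ e * (s ^ s * s ^ e)) * 5 ^ e
    = (3 ^ s * 3 ^ j * (2 ^ s * 2 ^ s * 2 ^ e)) * (N ^ s * N ^ j * s ^ s) * (5 ^ e * s ^ e)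
    by ring.
  by rewrite leq_mul2l se_le orbT.
have -> : 3 ^ s * 3 ^ j * (2 ^ s * 2 ^ s * 2 ^ e) * (N ^ s * N ^ j * s ^ s) * (2 ^ e * N ^ e)
  = (3 ^ s * 3 ^ j * (2 ^ s * 2 ^ s * 2 ^ e * 2 ^ e)) * (N ^ s * N ^ j * N ^ e * s ^ s) by ring.
have -> : N ^ s * N ^ j * N ^ e * (s ^ s * 5 ^ e) = 5 ^ e * (N ^ s * N ^ j * N ^ e * s ^ s)
  by ring.
by rewrite leq_mul2r const_le orbT.
Qed.

Lemma union_bound_term_le N s f : 0 < s -> 5 * s <= 2 * N ->
  f * 'C(N, s) = 'C(s.*2.-1, s) * N`! ->
  'C(N, s) * 'C(N, s.*2.-1) * 2 ^ s * f ^ 33 <= N`! ^ 33.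
Proof.
move=> s_gt0 le_sN def_f; set j := s.*2.-1 in def_f *; set c := 'C(N, s).
have le_jN : j <= N by rewrite /j; lia.
have ratio_le : 'C(j, s) ^ 33 * N ^ (33 * s) <= c ^ 33 * j ^ (33 * s).
  by rewrite (mulnC 33 s) !expnM -!expnMn leq_exp2rW // bin_ratio_le.
rewrite -(@leq_pmul2r (c ^ 33 * N ^ (33 * s))); last first.
  by rewrite muln_gt0 !expn_gt0 bin_gt0 (leq_trans s_gt0) //; lia.
have -> : c * 'C(N, j) * 2 ^ s * f ^ 33 * (c ^ 33 * N ^ (33 * s)) =
    c * 'C(N, j) * 2 ^ s * ((f * c) ^ 33 * N ^ (33 * s)) by rewrite expnMn; ring.
rewrite def_f expnMn.
apply: (@leq_trans ((c * 'C(N, j) * 2 ^ s * j ^ (33 * s)) * (c ^ 33 * N`! ^ 33))).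
  have -> : c * 'C(N, j) * 2 ^ s * ('C(j, s) ^ 33 * N`! ^ 33 * N ^ (33 * s)) =
      c * 'C(N, j) * 2 ^ s * ('C(j, s) ^ 33 * N ^ (33 * s)) * N`! ^ 33 by ring.
  have -> : c * 'C(N, j) * 2 ^ s * j ^ (33 * s) * (c ^ 33 * N`! ^ 33) =
      c * 'C(N, j) * 2 ^ s * (c ^ 33 * j ^ (33 * s)) * N`! ^ 33 by ring.
  by rewrite leq_mul2r leq_mul2l ratio_le !orbT.
have -> : N`! ^ 33 * (c ^ 33 * N ^ (33 * s)) = N ^ (33 * s) * (c ^ 33 * N`! ^ 33) by ring.
by rewrite leq_mul2r bin_bin_exp_le ?orbT.
Qed.

Lemma sum_halving_lt (x : nat -> nat) M K : 0 < M -> x 0 = 0 ->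
  (forall s, 0 < s -> x s * 2 ^ s <= M) -> \sum_(s < K.+1) x s < M.
Proof.
move=> M_gt0 x0 xM; rewrite big_ord_recl x0 add0n.
have := @sum_le_geometric K (fun i => x i.+1) M (fun i _ => xM i.+1 (ltn0Sn i)).
have : 0 < 2 ^ K by rewrite expn_gt0.
under [\sum_(i < K) x (bump 0 i)]eq_bigr do rewrite /bump add1n.
nia.
Qed.

Section SubsetsOfGivenSize.
Variable T : finType.

Lemma subset_of_card (A : {set T}) k : k <= #|A| ->
  exists2 B : {set T}, B \subset A & #|B| = k.
Proof.
rewrite -bin_gt0 -cards_draws => /card_gt0P [B]; rewrite inE => /andP [BA /eqP].
by exists B.
Qed.

Lemma superset_of_card (A : {set T}) k : #|A| <= k -> k <= #|T| ->
  exists2 B : {set T}, A \subset B & #|B| = k.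
Proof.
move=> le_Ak le_kT.
have [B BAc cardB] : exists2 B : {set T}, B \subset ~: A & #|B| = #|T| - k.
  by apply: subset_of_card; have := cardsC A; lia.
exists (~: B); first by rewrite -setCS setCK.
by have := cardsC B; lia.
Qed.

End SubsetsOfGivenSize.

Section PermutationsOfSubsets.
Variable T : finType.
Implicit Types I J K : {set T}.

Lemma perm_imset_card_eq K K' : #|K| = #|K'| -> exists t : {perm T}, t @: K = K'.
Proof.
move=> eq_KK'.
have listing (A : {set T}) : [/\ uniq (enum A ++ enum (~: A)),
    forall x, x \in enum A ++ enum (~: A) & size (enum A ++ enum (~: A)) = #|T|].
  split.
  - rewrite cat_uniq !enum_uniq /= andbT; apply/hasPn => x.
    by rewrite !mem_enum inE => ->.
  - by move=> x; rewrite mem_cat !mem_enum inE; case: (x \in A).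
  - by rewrite size_cat -!cardE cardsC.
have [ue me se] := listing K; have [ue' _ se'] := listing K'.
set e := enum K ++ enum (~: K) in ue me se.
set e' := enum K' ++ enum (~: K') in ue' se'.
pose f x := nth x e' (index x e).
have index_lt x : index x e < size e' by rewrite se' -se index_mem.
have f_inj : injective f.
  move=> x y; rewrite /f (set_nth_default x y (index_lt y)) => /eqP.
  rewrite nth_uniq // => /eqP eq_index.
  by rewrite -(nth_index x (me x)) eq_index nth_index.
exists (perm f_inj); apply/eqP.
rewrite eqEcard card_imset ?eq_KK' ?leqnn ?andbT; last exact: perm_inj.
apply/subsetP => _ /imsetP [x xK ->]; rewrite permE /f.
have xe : x \in enum K by rewrite mem_enum.
rewrite /e index_cat xe /e' nth_cat.
have lt_index : index x (enum K) < size (enum K').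
  by rewrite -cardE -eq_KK' cardE index_mem.
by rewrite lt_index -(mem_enum (mem K')) mem_nth.
Qed.

Definition nperm_onto I K := #|[set p : {perm T} | p @: I == K]|.

Lemma eq_nperm_onto I K K' : #|K| = #|K'| ->
  nperm_onto I K = nperm_onto I K'.
Proof.
suff le_card K1 K2 : #|K1| = #|K2| -> nperm_onto I K1 <= nperm_onto I K2.
  by move=> eq_KK'; apply/eqP; rewrite eqn_leq !le_card.
move=> /perm_imset_card_eq [t tK12].
have mulr_inj : injective (fun p : {perm T} => p * t)%g by exact: mulIg.
rewrite /nperm_onto -(card_imset _ mulr_inj); apply: subset_leq_card.
apply/subsetP => _ /imsetP [p + ->]; rewrite !inE => /eqP pIK.
by rewrite -tK12 -pIK -imset_comp; apply/eqP/eq_imset => x /=; rewrite permM.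
Qed.

Lemma sum_nperm_onto I (P : {set T} -> bool) :
  \sum_(K : {set T} | P K && (#|K| == #|I|)) nperm_onto I K =
  #|[set p : {perm T} | P (p @: I)]|.
Proof.
rewrite -sum1dep_card (partition_big (fun p : {perm T} => p @: I)
   (fun K : {set T} => P K && (#|K| == #|I|))) /=; last first.
  by move=> p Pp; rewrite Pp card_imset ?eqxx //; exact: perm_inj.
apply: eq_bigr => K /andP [PK _].
rewrite sum1dep_card; apply: eq_card => p; rewrite !inE.
by case: (p @: I =P K) => [->|_]; rewrite ?PK ?andbF.
Qed.

Lemma nperm_onto_self I : nperm_onto I I * 'C(#|T|, #|I|) = #|T|`!.
Proof.
have card_permT : #|{perm T}| = #|T|`!.
  rewrite -cardsT -card_perm; apply: eq_card => p; rewrite !inE.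
  by apply/esym/subsetP => x; rewrite inE.
rewrite -card_permT -[RHS]cardsT -(sum_nperm_onto I predT) /=.
under eq_bigr => K /eqP cardK do rewrite (eq_nperm_onto I cardK).
by rewrite sum_nat_cond_const card_draws mulnC.
Qed.

Lemma card_perm_imset_sub I J :
  #|[set p : {perm T} | p @: I \subset J]| * 'C(#|T|, #|I|) = 'C(#|J|, #|I|) * #|T|`!.
Proof.
rewrite -(sum_nperm_onto I (fun K => K \subset J)).
under eq_bigr => K /andP [_ /eqP cardK] do rewrite (eq_nperm_onto I cardK).
rewrite sum_nat_cond_const -mulnA nperm_onto_self -cards_draws.
by congr (#|_| * _); apply/setP => K; rewrite !inE.
Qed.

End PermutationsOfSubsets.

Lemma sum_over_sets_by_card (T : finType) (F : nat -> nat) :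
  \sum_(I : {set T}) F #|I| = \sum_(s < #|T|.+1) 'C(#|T|, s) * F s.
Proof.
rewrite (partition_big (fun I : {set T} => inord #|I| : 'I_#|T|.+1) xpredT) //=.
apply: eq_bigr => s _.
rewrite (eq_bigl (fun I : {set T} => #|I| == s)); last first.
  by move=> I; rewrite -(inj_eq val_inj) /= inordK // ltnS max_card.
by rewrite (eq_bigr (fun=> F s)) => [|I /eqP ->//]; rewrite sum_nat_cond_const card_draws.
Qed.

Definition union_images n (sg : {ffun 'I_33 -> {perm 'I_n}}) (I : {set 'I_n}) :=
  \bigcup_(k < 33) (sg k @: I).

Section RandomExpander.
Variables N t : nat.
Hypothesis le_tN : 5 * t <= 2 * N.

Local Notation family := {ffun 'I_33 -> {perm 'I_N}}.
Implicit Types (sg : family) (I J : {set 'I_N}).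

Definition contracting sg :=
  [exists I : {set 'I_N}, (#|I| <= t) && (#|union_images sg I| < 2 * #|I|)].

Definition small_pair I J := [&& 0 < #|I|, #|I| <= t & #|J| == #|I|.*2.-1].

Definition maps_into I J := [set sg : family | [forall k, sg k @: I \subset J]].

(* The number of permutations of 'I_N mapping a given s-set into a given (2s-1)-set. *)
Definition nperm_into s := 'C(s.*2.-1, s) * N`! %/ 'C(N, s).

Lemma contracting_maps_into sg :
  contracting sg -> exists I J, small_pair I J && (sg \in maps_into I J).
Proof.
case/existsP => I /andP [le_It lt_UI].
have I_gt0 : 0 < #|I| by case: #|I| lt_UI => //; rewrite muln0.
have [J UJ cardJ] := @superset_of_card _ (union_images sg I) (#|I|).*2.-1
  ltac:(lia) ltac:(by rewrite card_ord; lia).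
exists I, J; rewrite /small_pair I_gt0 le_It cardJ eqxx inE.
by apply/forallP => k; apply: subset_trans UJ; apply: (bigcup_sup k).
Qed.

Lemma card_maps_into I J :
  #|maps_into I J| = #|[set p : {perm 'I_N} | p @: I \subset J]| ^ 33.
Proof.
have := card_ffun_on 'I_33 [set p : {perm 'I_N} | p @: I \subset J].
rewrite card_ord => <-; apply: eq_card => sg.
by rewrite !inE; apply: eq_forallb => k; rewrite !inE.
Qed.

Lemma nperm_intoE s : 0 < s -> s <= t -> nperm_into s * 'C(N, s) = 'C(s.*2.-1, s) * N`!.
Proof.
move=> s_gt0 le_st.
have [I _ cardI] := @subset_of_card _ [set: 'I_N] s ltac:(by rewrite cardsT card_ord; lia).
have [J _ cardJ] := @subset_of_card _ [set: 'I_N] s.*2.-1 ltac:(by rewrite cardsT card_ord; lia).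
have := card_perm_imset_sub I J; rewrite card_ord cardI cardJ => card_into.
by rewrite /nperm_into -card_into mulnK // bin_gt0; lia.
Qed.

Lemma card_maps_into_small I J : small_pair I J -> #|maps_into I J| = nperm_into #|I| ^ 33.
Proof.
case/and3P => I_gt0 le_It /eqP cardJ.
rewrite card_maps_into; congr (_ ^ _).
apply/eqP; rewrite -(eqn_pmul2r (_ : 0 < 'C(N, #|I|))); last by rewrite bin_gt0; lia.
by rewrite nperm_intoE // -cardJ -[N in 'C(N, _)]card_ord card_perm_imset_sub card_ord.
Qed.

Lemma card_contracting_le :
  #|[set sg | contracting sg]| <= \sum_I \sum_J small_pair I J * #|maps_into I J|.
Proof.
rewrite -sum1_card.
apply: (@leq_trans (\sum_sg \sum_I \sum_J (small_pair I J && (sg \in maps_into I J)))).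
  rewrite [X in _ <= X](bigID (fun sg => sg \in [set sg | contracting sg])) /=.
  apply: leq_trans (leq_addr _ _); apply: leq_sum => sg; rewrite inE.
  case/contracting_maps_into => I [J pair_IJ].
  by rewrite (bigD1 I) //= (bigD1 J) //= pair_IJ -addnA leq_addr.
rewrite exchange_big; apply: leq_sum => I _; rewrite exchange_big; apply: leq_sum => J _.
case: (small_pair I J); last by rewrite big1.
by rewrite mul1n -sum1_card [X in _ <= X]big_mkcond; apply: leq_sum => sg _; case: ifP.
Qed.

Lemma sum_small_pairs :
  \sum_I \sum_J small_pair I J * #|maps_into I J| =
  \sum_(s < N.+1) 'C(N, s) * (((0 < s) && (s <= t)) * 'C(N, s.*2.-1) * nperm_into s ^ 33).
Proof.
have := sum_over_sets_by_card 'I_N (fun s => ((0 < s) && (s <= t)) * 'C(N, s.*2.-1) *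
  nperm_into s ^ 33); rewrite card_ord => <-.
apply: eq_bigr => I _.
rewrite (bigID (fun J : {set 'I_N} => #|J| == (#|I|).*2.-1)) /= [X in _ + X]big1 ?addn0;
  last by move=> J /negbTE cardJ; rewrite /small_pair cardJ !andbF.
rewrite (eq_bigr (fun=> ((0 < #|I|) && (#|I| <= t)) * nperm_into #|I| ^ 33)); last first.
  move=> J cardJ; have pairE : small_pair I J = (0 < #|I| <= t).
    by rewrite /small_pair cardJ andbT.
  rewrite pairE; case: (boolP (0 < #|I| <= t)) => // small_I.
  by rewrite card_maps_into_small // pairE.
by rewrite sum_nat_cond_const card_draws card_ord mulnCA mulnA.
Qed.

Lemma card_contracting_lt : #|[set sg | contracting sg]| < #|{: family}|.
Proof.
apply: (leq_ltn_trans card_contracting_le); rewrite sum_small_pairs.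
rewrite card_ffun !card_ord card_Sn.
apply: (@sum_halving_lt (fun s =>
  'C(N, s) * (((0 < s) && (s <= t)) * 'C(N, s.*2.-1) * nperm_into s ^ 33))).
- by rewrite expn_gt0 fact_gt0.
- by rewrite !mul0n muln0.
move=> s s_gt0; case: (leqP s t) => le_st; last by rewrite andbF !mul0n muln0 mul0n.
rewrite s_gt0 mul1n mulnA mulnAC.
by apply: union_bound_term_le => //; [lia | exact: nperm_intoE].
Qed.

End RandomExpander.

Lemma exists_expanding_family N t : 5 * t <= 2 * N ->
  exists sg : {ffun 'I_33 -> {perm 'I_N}},
    forall I : {set 'I_N}, #|I| <= t -> 2 * #|I| <= #|union_images sg I|.
Proof.
move=> le_tN.
have [sg _] : exists2 sg : {ffun 'I_33 -> {perm 'I_N}},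
    sg \in setT & sg \notin [set sg | contracting t sg].
  apply/subsetPn; rewrite subTset; apply/eqP => all_contracting.
  by move: (card_contracting_lt le_tN); rewrite all_contracting cardsT ltnn.
rewrite inE => /existsPn no_contr; exists sg => I le_It.
by have := no_contr I; rewrite le_It /= -leqNgt.
Qed.

Lemma disjoint_setD (T : finType) (A B : {set T}) : [disjoint A & B :\: A].
Proof. by rewrite -setI_eq0 setDE setICA setICr setI0. Qed.

Lemma setUD_sub (T : finType) (A B : {set T}) : A \subset B -> A :|: (B :\: A) = B.
Proof. by move=> AB; rewrite -{2}(setID B A) (setIidPr AB) setUC. Qed.

Section Hall.
Variables X Y : finType.
Variable E : {set X * Y}.
Implicit Types (S A C : {set X}) (T B : {set Y}) (M : {set X * Y}).

Definition rnbh T A := [set y in T | [exists x in A, (x, y) \in E]].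
Definition lnbh S B := [set x in S | [exists y in B, (x, y) \in E]].

Definition hall_condition S T := forall A, A \subset S -> #|A| <= #|rnbh T A|.
Definition matchable S T := exists M, perfect_matching_between E S T M.

Lemma rnbh_sub T A : rnbh T A \subset T.
Proof. by apply/subsetP => y; rewrite inE => /andP []. Qed.

Lemma rnbhS T A A' : A \subset A' -> rnbh T A \subset rnbh T A'.
Proof.
move=> /subsetP sAA'; apply/subsetP => y; rewrite !inE => /andP [-> /existsP [x /andP [xA xy]]].
by apply/existsP; exists x; rewrite sAA'.
Qed.

Lemma matchable0 : matchable set0 set0.
Proof. by exists set0; split; rewrite ?sub0set // => ?; rewrite inE. Qed.

Lemma matchable1 x y : (x, y) \in E -> matchable [set x] [set y].
Proof.
move=> xy; exists [set (x, y)]; split.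
- by rewrite sub1set.
- by move=> e; rewrite !inE => /eqP ->; rewrite !eqxx.
- move=> x'; rewrite inE => /eqP ->; apply/eqP/cards1P; exists y.
  by apply/setP => y'; rewrite !inE xpair_eqE eqxx.
- move=> y'; rewrite inE => /eqP ->; apply/eqP/cards1P; exists x.
  by apply/setP => x'; rewrite !inE xpair_eqE eqxx andbT.
Qed.

Lemma matchableU S1 S2 T1 T2 : [disjoint S1 & S2] -> [disjoint T1 & T2] ->
  matchable S1 T1 -> matchable S2 T2 -> matchable (S1 :|: S2) (T1 :|: T2).
Proof.
move=> dS dT [M1 [sM1 eM1 rM1 cM1]] [M2 [sM2 eM2 rM2 cM2]]; exists (M1 :|: M2); split.
- by rewrite subUset sM1 sM2.
- move=> e; rewrite inE => /orP [/eM1 | /eM2] /andP [h1 h2]; by rewrite !inE h1 h2 ?orbT.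
- have out2 x y : x \in S1 -> (x, y) \in M2 = false.
    by move=> xS1; apply: contraTF xS1 => /eM2 /andP [xS2 _]; rewrite (disjointFl dS).
  have out1 x y : x \in S2 -> (x, y) \in M1 = false.
    by move=> xS2; apply: contraTF xS2 => /eM1 /andP [xS1 _]; rewrite (disjointFr dS).
  move=> x; rewrite inE => /orP [] xS.
  + by rewrite -(rM1 x xS); apply: eq_card => y; rewrite !inE out2 ?orbF.
  + by rewrite -(rM2 x xS); apply: eq_card => y; rewrite !inE out1.
- have out2 x y : y \in T1 -> (x, y) \in M2 = false.
    by move=> yT1; apply: contraTF yT1 => /eM2 /andP [_ yT2]; rewrite (disjointFl dT).
  have out1 x y : y \in T2 -> (x, y) \in M1 = false.
    by move=> yT2; apply: contraTF yT2 => /eM1 /andP [_ yT1]; rewrite (disjointFr dT).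
  move=> y; rewrite inE => /orP [] yT.
  + by rewrite -(cM1 y yT); apply: eq_card => x; rewrite !inE out2 ?orbF.
  + by rewrite -(cM2 y yT); apply: eq_card => x; rewrite !inE out1.
Qed.

Lemma rnbh_rnbh T A C : C \subset A -> rnbh (rnbh T A) C = rnbh T C.
Proof.
move=> /subsetP sCA; apply/setP => y; rewrite !inE -andbA; congr (_ && _).
by apply: andb_idl => /existsP [x /andP [xC xy]]; apply/existsP; exists x; rewrite sCA.
Qed.

Lemma rnbhU_sub T A C : rnbh T (A :|: C) \subset rnbh T A :|: rnbh (T :\: rnbh T A) C.
Proof.
apply/subsetP => y /setIdP [yT /existsP [x /andP [xAC xy]]].
rewrite in_setU; have [//|yNA] := boolP (y \in rnbh T A).
rewrite inE in_setD yNA yT /=; apply/existsP; exists x; rewrite xy andbT.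
move: xAC; rewrite inE => /orP [xA | //]; case/negP: yNA.
by rewrite inE yT; apply/existsP; exists x; rewrite xA.
Qed.

(* Halmos-Vaughan induction: either some proper nonempty A is tight and the matching
   splits along A and its neighbourhood, or every such A has surplus and any edge at x can
   be matched first. *)
Section Induction.
Variables (S : {set X}) (T : {set Y}).
Hypothesis IH : forall S' T', #|S'| < #|S| -> #|S'| = #|T'| -> hall_condition S' T' ->
  matchable S' T'.
Hypotheses (eq_ST : #|S| = #|T|) (hallST : hall_condition S T).

Lemma matchable_tight A : A \subset S -> 0 < #|A| -> A != S -> #|rnbh T A| <= #|A| ->
  matchable S T.
Proof.
move=> AS A_gt0 AnS le_NA; set N := rnbh T A.
have NA : #|N| = #|A| by apply/eqP; rewrite eqn_leq le_NA hallST.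
have lt_AS : #|A| < #|S| by rewrite proper_card // properEneq AnS AS.
have cardSA : #|S :\: A| = #|S| - #|A| by rewrite cardsD (setIidPr AS).
have cardTN : #|T :\: N| = #|T| - #|N| by rewrite cardsD (setIidPr (rnbh_sub T A)).
have matchA : matchable A N.
  apply: IH => // C CA; rewrite rnbh_rnbh //; exact: hallST (subset_trans CA AS).
have matchSA : matchable (S :\: A) (T :\: N).
  apply: IH; [lia | lia |] => C CSA.
  have dAC : [disjoint A & C] by apply: disjointWr CSA (disjoint_setD _ _).
  have sACS : A :|: C \subset S by rewrite subUset AS (subset_trans CSA (subsetDl _ _)).
  have := leq_trans (hallST sACS) (subset_leq_card (rnbhU_sub T A C)).
  have cardAC : #|A :|: C| = #|A| + #|C| by apply/eqP; rewrite (leq_card_setU A C).2.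
  by have := (leq_card_setU N (rnbh (T :\: N) C)).1; rewrite cardAC -/N NA; lia.
rewrite -(setUD_sub AS) -(setUD_sub (rnbh_sub T A)).
by apply: matchableU; rewrite ?disjoint_setD.
Qed.

Lemma matchable_slack x : x \in S ->
  (forall A, A \subset S -> 0 < #|A| -> A != S -> #|A| < #|rnbh T A|) -> matchable S T.
Proof.
move=> xS slack.
have /card_gt0P [y] : 0 < #|rnbh T [set x]|.
  by apply: leq_trans (hallST _); rewrite ?cards1 ?sub1set.
rewrite inE => /andP [yT /existsP [_ /andP [/set1P -> xy]]].
have cardSx := cardsD1 x S; have cardTy := cardsD1 y T; rewrite xS in cardSx; rewrite yT in cardTy.
have matchSx : matchable (S :\ x) (T :\ y).
  apply: IH; [lia | lia |] => A ASx.
  have [/eqP|A_gt0] := posnP #|A|; first by rewrite cards_eq0 => /eqP ->; rewrite cards0.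
  have AS : A \subset S by apply: subset_trans ASx (subsetDl _ _).
  have AnS : A != S by apply: contraTneq ASx => ->; apply/subsetPn; exists x; rewrite ?inE ?eqxx.
  apply: leq_trans (_ : #|rnbh T A :\ y| <= _).
    by have := cardsD1 y (rnbh T A); have := slack A AS A_gt0 AnS; case: (y \in rnbh T A); lia.
  by apply/subset_leq_card/subsetP => z; rewrite !inE => /andP [-> /andP [-> ->]].
rewrite -(setD1K xS) -(setD1K yT).
by apply: matchableU (matchable1 xy) matchSx; rewrite disjoints_subset sub1set !inE eqxx.
Qed.

End Induction.

Theorem hall_matching S T : #|S| = #|T| -> hall_condition S T -> matchable S T.
Proof.
have [n] := ubnP #|S|; elim: n S T => // n IHn S T lt_Sn eq_ST hallST.
have IH S' T' : #|S'| < #|S| -> #|S'| = #|T'| -> hall_condition S' T' -> matchable S' T'.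
  by move=> lt_S'S; apply: IHn; apply: leq_trans lt_S'S _.
have [S0 | [x xS]] := set_0Vmem S.
  have T0 : T = set0 by apply/eqP; rewrite -cards_eq0 -eq_ST S0 cards0.
  by rewrite S0 T0; exact: matchable0.
pose tight A := [&& A \subset S, 0 < #|A|, A != S & #|rnbh T A| <= #|A|].
case: (pickP tight) => [A|no_tight].
  by case/and4P; exact: matchable_tight.
apply: matchable_slack xS _ => // A AS A_gt0 AnS.
by have := no_tight A; rewrite /tight AS A_gt0 AnS /= ltnNge => ->.
Qed.

(* It suffices to check Hall's condition for sets of at most half the size, on both sides:
   a larger violating set A forces the complement of its neighbourhood to violate it on
   the other side. *)
Lemma hall_condition_small S T h : #|S| = #|T| -> #|S| <= 2 * h ->
  (forall A, A \subset S -> #|A| <= h -> #|A| <= #|rnbh T A|) ->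
  (forall B, B \subset T -> #|B| <= h -> #|B| <= #|lnbh S B|) ->
  hall_condition S T.
Proof.
move=> eq_ST le_Sh hallA hallB A AS; rewrite leqNgt; apply/negP => lt_NA.
have [le_Ah | lt_hA] := leqP #|A| h; first by move: (hallA A AS le_Ah); lia.
have [A' A'A cardA'] := subset_of_card (ltnW lt_hA).
have le_hN : h <= #|rnbh T A|.
  rewrite -cardA'; apply: leq_trans (hallA A' (subset_trans A'A AS) _) _; first by rewrite cardA'.
  exact/subset_leq_card/rnbhS.
set B := T :\: rnbh T A.
have cardB : #|B| = #|T| - #|rnbh T A| by rewrite cardsD (setIidPr (rnbh_sub T A)).
have lnbhB : #|lnbh S B| <= #|S :\: A|.
  apply/subset_leq_card/subsetP => x /setIdP [xS /existsP [y /andP [yB xy]]].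
  have yT : y \in T := subsetP (subsetDl _ _) y yB.
  rewrite inE xS andbT; apply: contraTN yB => xA.
  apply/negP; rewrite inE => /andP [/negP []].
  by rewrite inE yT; apply/existsP; exists x; rewrite xA.
have := hallB B (subsetDl _ _) ltac:(rewrite cardB; lia).
have := subset_leq_card (rnbh_sub T A); have := subset_leq_card AS.
by move: lnbhB; rewrite cardB cardsD (setIidPr AS); lia.
Qed.

End Hall.

Section BipartiteGraphs.
Variables X Y : finType.
Implicit Types (E F : {set X * Y}) (S : {set X}) (T : {set Y}).

Lemma max_deg_leS E F d : E \subset F -> max_deg_le F d -> max_deg_le E d.
Proof.
move=> /subsetP sEF [degX degY]; split=> [x | y].
- by apply: leq_trans (degX x); apply/subset_leq_card/subsetP => y; rewrite !inE => /sEF.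
- by apply: leq_trans (degY y); apply/subset_leq_card/subsetP => x; rewrite !inE => /sEF.
Qed.

Lemma max_deg_le_setU1 E e d : max_deg_le E d -> max_deg_le (e |: E) d.+1.
Proof.
move=> [degX degY]; split=> [x | y].
- apply: (@leq_trans #|[set e.2] :|: [set y | (x, y) \in E]|).
    by apply/subset_leq_card/subsetP => y; rewrite !inE => /orP [/eqP <- | ->];
      rewrite ?eqxx ?orbT.
  have [le_U _] := leq_card_setU [set e.2] [set y | (x, y) \in E].
  by apply: leq_trans le_U _; rewrite cards1 add1n ltnS; exact: degX.
- apply: (@leq_trans #|[set e.1] :|: [set x | (x, y) \in E]|).
    by apply/subset_leq_card/subsetP => x; rewrite !inE => /orP [/eqP <- | ->];
      rewrite ?eqxx ?orbT.
  have [le_U _] := leq_card_setU [set e.1] [set x | (x, y) \in E].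
  by apply: leq_trans le_U _; rewrite cards1 add1n ltnS; exact: degY.
Qed.

Lemma max_deg_le_leq E d d' : d <= d' -> max_deg_le E d -> max_deg_le E d'.
Proof. by move=> le_dd' [degX degY]; split=> v; apply: leq_trans le_dd'. Qed.

Lemma perfect_matching_betweenS E F S T M : E \subset F ->
  perfect_matching_between E S T M -> perfect_matching_between F S T M.
Proof. by move=> sEF [sME ? ? ?]; split=> //; apply: subset_trans sEF. Qed.

Lemma odd_between_setU1 E e : e \notin E ->
  exists F, [/\ odd #|F|, E \subset F & F \subset e |: E].
Proof.
move=> eNE; case: (boolP (odd #|E|)) => oddE; first by exists E; rewrite subxx subsetUr.
by exists (e |: E); rewrite cardsU1 eNE /= oddE subsetUr subxx.
Qed.

End BipartiteGraphs.

Section Construction.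
Variable m : nat.
Implicit Types (v : side m) (C : {set side m}) (I : {set 'I_(5 * m)}).
Local Notation family := {ffun 'I_33 -> {perm 'I_(5 * m)}}.

Lemma le2m5m : 2 * m <= 5 * m. Proof. lia. Qed.

Definition fold_side v : 'I_(5 * m) :=
  match v with inl i => widen_ord le2m5m i | inr j => j end.

Lemma card_fold_side_preim I : #|[set v | fold_side v \in I]| <= 2 * #|I|.
Proof.
pose tag v := if v is inl _ then true else false.
have tag_fold_inj : injective (fun v => (tag v, fold_side v)).
  move=> [a|a] [b|b] //= [] eq_ab; last by rewrite eq_ab.
  by congr inl; apply: val_inj; exact: eq_ab.
rewrite -(card_imset _ tag_fold_inj).
apply: (@leq_trans #|setX [set: bool] I|); last by rewrite cardsX cardsT card_bool.
by apply/subset_leq_card/subsetP => _ /imsetP [v + ->]; rewrite !inE.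
Qed.

Lemma inr_inj : injective (@inr 'I_(2 * m) 'I_(5 * m)).
Proof. by move=> a b []. Qed.

Lemma card_lift_side (A : {set 'I_(2 * m)}) : #|lift_side A| = #|A| + 5 * m.
Proof.
have inl_inj : injective (@inl 'I_(2 * m) 'I_(5 * m)) by move=> a b [].
have -> : lift_side A = inl @: A :|: inr @: [set: 'I_(5 * m)].
  apply/setP => [[a|b]]; rewrite in_setU inE.
  - by rewrite (mem_imset _ _ inl_inj); case: imsetP => [[]|]; rewrite ?orbF.
  - by rewrite (mem_imset _ _ inr_inj) in_setT orbT.
have disj : inl @: A :&: inr @: [set: 'I_(5 * m)] = set0.
  by apply/setP => v; rewrite !inE; apply/andP => [[/imsetP [a _ ->] /imsetP [c _]]].
by rewrite cardsU disj cards0 subn0 !card_imset ?cardsT ?card_ord //; exact: inr_inj.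
Qed.

Definition expanding (sg : family) :=
  forall I, #|I| <= 2 * m -> 2 * #|I| <= #|union_images sg I|.

Lemma union_imagesS (sg : family) I I' :
  I \subset I' -> union_images sg I \subset union_images sg I'.
Proof.
by move=> sII'; apply/bigcupsP => k _; apply: subset_trans (imsetS _ sII') (bigcup_sup k _).
Qed.

(* Folding loses a factor at most 2; a set folding onto more than 2m points is handled
   through a 2m-subset of its fold. *)
Lemma expanding_fold (sg : family) C : expanding sg -> #|C| <= 4 * m ->
  #|C| <= #|union_images sg (fold_side @: C)|.
Proof.
move=> sg_exp le_C4m.
have le_Cfold : #|C| <= 2 * #|fold_side @: C|.
  apply: leq_trans (card_fold_side_preim _); apply/subset_leq_card/subsetP => v vC.
  by rewrite inE imset_f.
have [le_fold2m | lt2m_fold] := leqP #|fold_side @: C| (2 * m).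
  exact: leq_trans le_Cfold (sg_exp _ le_fold2m).
have [I sIC cardI] := subset_of_card (ltnW lt2m_fold).
apply: leq_trans (subset_leq_card (union_imagesS sg sIC)).
by apply: leq_trans (sg_exp I (eq_leq cardI)); rewrite cardI; lia.
Qed.

Definition perm_graph (sg tg : family) : {set side m * side m} :=
  [set e | [exists k, e.2 == inr (sg k (fold_side e.1))] ||
           [exists k, e.1 == inr (tg k (fold_side e.2))]].

Lemma perm_graph_ldeg sg tg x : ldeg (perm_graph sg tg) x <= 99.
Proof.
pose out := [set (inr (sg k (fold_side x)) : side m) | k : 'I_33].
pose back := [set (tg k)^-1%g (fold_side x) | k : 'I_33].
apply: (@leq_trans #|out :|: [set y | fold_side y \in back]|).
  apply/subset_leq_card/subsetP => y; rewrite !inE /=.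
  case/orP => /existsP [k /eqP xy]; apply/orP; [left | right]; apply/imsetP; exists k => //.
  by rewrite xy /= permK.
have [le_U _] := leq_card_setU out [set y | fold_side y \in back].
have le_out : #|out| <= 33 by apply: leq_trans (leq_imset_card _ _) _; rewrite card_ord.
have le_back : #|back| <= 33 by apply: leq_trans (leq_imset_card _ _) _; rewrite card_ord.
have := card_fold_side_preim back; lia.
Qed.

Lemma perm_graph_max_deg sg tg : max_deg_le (perm_graph sg tg) 99.
Proof.
split=> v; first exact: perm_graph_ldeg.
rewrite /rdeg (eq_card (B := [set x | (v, x) \in perm_graph tg sg])) ?perm_graph_ldeg //.
by move=> x; rewrite !inE orbC.
Qed.

Lemma perm_graph_hall sg tg (A1' B1' : {set 'I_(2 * m)}) : expanding sg -> expanding tg ->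
  #|A1'| = #|B1'| -> matchable (perm_graph sg tg) (lift_side A1') (lift_side B1').
Proof.
move=> sg_exp tg_exp eq_AB.
have eq_ST : #|lift_side A1'| = #|lift_side B1'| by rewrite !card_lift_side eq_AB.
apply: hall_matching => //; apply: (@hall_condition_small _ _ _ _ _ (4 * m)) => //.
- rewrite card_lift_side; have := max_card A1'; rewrite card_ord; lia.
- move=> C _ le_C4m; apply: leq_trans (expanding_fold sg_exp le_C4m) _.
  rewrite -(card_imset _ inr_inj); apply/subset_leq_card/subsetP => _ /imsetP [z + ->].
  case/bigcupP => k _ /imsetP [_ /imsetP [x xC ->] ->].
  by rewrite !inE /=; apply/existsP; exists x; rewrite xC inE /= orbC; apply/orP; right;
    apply/existsP; exists k.
- move=> C _ le_C4m; apply: leq_trans (expanding_fold tg_exp le_C4m) _.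
  rewrite -(card_imset _ inr_inj); apply/subset_leq_card/subsetP => _ /imsetP [z + ->].
  case/bigcupP => k _ /imsetP [_ /imsetP [y yC ->] ->].
  by rewrite !inE /=; apply/existsP; exists y; rewrite yC inE /=; apply/orP; right;
    apply/existsP; exists k.
Qed.

End Construction.

Theorem mainTheorem7 :
  exists m0 : nat, forall m : nat, m0 <= m ->
    exists E : {set side m * side m},
      [/\ odd #|E|,
          max_deg_le E 102 &
          forall (A1' B1' : {set 'I_(2 * m)}),
            #|A1'| = #|B1'| -> m <= #|A1'| ->
            exists M : {set side m * side m},
              perfect_matching_between E (lift_side A1') (lift_side B1') M].
Proof.
exists 1 => m m_gt0.
have le_2m5m : 5 * (2 * m) <= 2 * (5 * m) by lia.
have [sg sg_exp] := exists_expanding_family le_2m5m.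
have [tg tg_exp] := exists_expanding_family le_2m5m.
have a0 : 'I_(2 * m) by exists 0; lia.
have e0F : (inl a0, inl a0) \notin perm_graph sg tg.
  by rewrite inE; apply/norP; split; apply/existsPn.
have [E [oddE sFE sEF]] := odd_between_setU1 e0F.
exists E; split=> //.
  exact: max_deg_leS sEF (max_deg_le_leq _ (max_deg_le_setU1 _ (perm_graph_max_deg sg tg))).
move=> A1' B1' eq_AB _; have [M pmM] := perm_graph_hall sg_exp tg_exp eq_AB.
by exists M; apply: perfect_matching_betweenS sFE pmM.
Qed.
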